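(* Fix an integer $k\ge 3$. There exist a constant $c>0$ and $n_0$ (depending only on $k$) such that for every even $n\ge n_0$ and all $\mathbf{x},\mathbf{x}'\in\{0,1\}^{n/2}$ with $D:=|\mathbf{x}|-|\mathbf{x}'|\ge 0$, $$C_k(G^{\mathbf{x}})-C_k(G^{\mathbf{x}'})\ \ge\ c\,n^{k-2}D,$$ i.e. $C_k(G^{\mathbf{x}})-C_k(G^{\mathbf{x}'})=\Omega(n^{k-2}\cdot D)$.
   Context: For even $n$ and $\mathbf{x}=(x_1,\dots,x_{n/2})\in\{0,1\}^{n/2}$, the graph $G^{\mathbf{x}}=(V,E^{\mathbf{x}})$ has $V=\{v_1,\dots,v_n\}$; every pair $\{u,v\}$ of distinct nodes that is not of the form $\{v_{2i-1},v_{2i}\}$ is an edge, and for $1\le i\le n/2$ the pair $\{v_{2i-1},v_{2i}\}$ is an edge iff $x_i=1$. $|\mathbf{x}|$ denotes the number of ones in $\mathbf{x}$. $C_k(G)$ is the number of subgraphs of $G$ isomorphic to the cycle on $k$ vertices. *)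

From HB Require Import structures.
From mathcomp Require Import all_boot all_order all_algebra.
From mathcomp Require Import reals.
Set Implicit Arguments. Unset Strict Implicit. Unset Printing Implicit Defensive.
Import Order.TTheory GRing.Theory Num.Theory.

(* Vertices v_1..v_n are represented by 'I_n (v_{j+1} <-> j).  The pair
   {v_{2i-1}, v_{2i}} (1 <= i <= n/2) becomes {2(i-1), 2(i-1)+1}, i.e. the
   pairs {u,v} with u./2 = v./2; its indicator is x (u./2).
   x : {ffun 'I_(n./2) -> bool}, coordinate x_i <-> x (i-1). *)

Definition Gx_adj (n : nat) (x : {ffun 'I_(n./2) -> bool}) (u v : 'I_n) : bool :=
  (u != v) &&
  (if (u : nat)./2 == (v : nat)./2 then
     (if insub ((u : nat)./2) is Some i then x i else false)
   else true).

Definition weight m (x : {ffun 'I_m -> bool}) : nat := #|[set i | x i]|.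

Definition cyc_adj k (i j : 'I_k) : bool :=
  ((j : nat) == (i.+1 %% k)) || ((i : nat) == (j.+1 %% k)).

Definition is_subgraph n (e : rel 'I_n) (S : {set 'I_n}) (F : {set {set 'I_n}}) :=
  [forall E in F, exists u, exists v,
     [&& E == [set u; v], u != v, e u v, u \in S & v \in S]].

Definition iso_cycle n k (S : {set 'I_n}) (F : {set {set 'I_n}}) :=
  [exists f : {ffun 'I_k -> 'I_n},
     [&& injectiveb f, [set f i | i in 'I_k] == S &
         [forall i, forall j, ([set f i; f j] \in F) == cyc_adj i j]]].

Definition Ck n k (e : rel 'I_n) : nat :=
  #|[set p : {set 'I_n} * {set {set 'I_n}} |
      is_subgraph e p.1 p.2 && iso_cycle k p.1 p.2]|.

From HB Require Import structures.
From mathcomp Require Import all_boot all_order all_algebra.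
From mathcomp Require Import reals.
From mathcomp Require Import perm zify lra.
Import Order.TTheory GRing.Theory Num.Theory.
Set Implicit Arguments. Unset Strict Implicit. Unset Printing Implicit Defensive.

(* Switching on pair i of G^x (x_i = 0 -> 1) only adds edges, and it creates,
   for every set T of k-2 other pairs, a new k-cycle that runs through both
   vertices of pair i and then through the first vertex of each pair of T.
   These cycles use the new edge, so they are not cycles of G^x: each switch
   raises C_k by at least binom(n/2-1, k-2) >= n^(k-2) / (4^(k-2) (k-2)!)
   once n >= 4k.  Moreover C_k(G^x) only depends on |x|, because a
   permutation of the pairs mapping x to x' relabels G^x into G^x'.  So
   |x| - |x'| switches turn x' into a vector with the same C_k as x. *)

Lemma eq_set2_inv (T : finType) (a b c d : T) :
  [set a; b] = [set c; d] -> (a = c /\ b = d) \/ (a = d /\ b = c).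
Proof.
move/setP=> eq_ab_cd.
have := eq_ab_cd a; have := eq_ab_cd b; have := eq_ab_cd c; have := eq_ab_cd d.
rewrite !inE !eqxx ?orbT => hd hc /esym/orP[]/eqP eb /esym/orP[]/eqP ea;
  subst; auto.
- by case/orP: hd => /eqP->; auto.
- by case/orP: hc => /eqP->; auto.
Qed.

Section CycleCopies.

Variables (n k : nat).
Implicit Types (e : rel 'I_n) (f : {ffun 'I_k -> 'I_n}).

Definition cycle_copies e :=
  [set p : {set 'I_n} * {set {set 'I_n}} | is_subgraph e p.1 p.2 && iso_cycle k p.1 p.2].

Lemma card_cycle_copies e : #|cycle_copies e| = Ck k e.
Proof. by []. Qed.

Lemma cycle_copies_subrel e e' : subrel e e' -> cycle_copies e \subset cycle_copies e'.
Proof.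
move=> ee'; apply/subsetP => -[S F]; rewrite !inE /= => /andP[sub ->].
rewrite andbT; apply/forallP => E; apply/implyP => EF.
have /existsP[u /existsP[v /and5P[Euv uv euv uS vS]]] := implyP (forallP sub E) EF.
by apply/existsP; exists u; apply/existsP; exists v; rewrite Euv uv ee' ?uS ?vS.
Qed.

Lemma leq_Ck_embedding e e' (s : 'I_n -> 'I_n) : injective s ->
  (forall u v, e' (s u) (s v) = e u v) -> (Ck k e <= Ck k e')%N.
Proof.
move=> s_inj es.
pose g (p : {set 'I_n} * {set {set 'I_n}}) := (s @: p.1, [set s @: E | E : {set 'I_n} in p.2]).
have g_inj : injective g.
  move=> [S1 F1] [S2 F2] [eqS eqF]; congr pair; first exact: imset_inj eqS.
  exact: (imset_inj (imset_inj s_inj)) eqF.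
rewrite -!card_cycle_copies -(card_imset _ g_inj); apply: subset_leq_card.
apply/subsetP => _ /imsetP[[S F] + ->]; rewrite !inE /= => /andP[sub iso].
have simset2 a b : [set s a; s b] = s @: [set a; b] by rewrite imsetU1 imset_set1.
apply/andP; split.
  apply/forallP => E'; apply/implyP => /imsetP[E EF ->].
  have /existsP[u /existsP[v /and5P[/eqP-> uv euv uS vS]]] := implyP (forallP sub E) EF.
  apply/existsP; exists (s u); apply/existsP; exists (s v).
  by rewrite -simset2 eqxx (inj_eq s_inj) uv es euv !imset_f.
case/existsP: iso => f /and3P[/injectiveP f_inj /eqP fS /forallP fE].
apply/existsP; exists [ffun i => s (f i)]; apply/and3P; split.
- by apply/injectiveP => i j; rewrite !ffunE => /s_inj /f_inj.
- by apply/eqP; rewrite -fS -imset_comp; apply: eq_imset => i; rewrite ffunE.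
- apply/forallP => i; apply/forallP => j; rewrite !ffunE simset2.
  by rewrite (mem_imset _ _ (imset_inj s_inj)) (forallP (fE i) j).
Qed.

Lemma cyc_adj_sym (i j : 'I_k) : cyc_adj i j = cyc_adj j i.
Proof. by rewrite /cyc_adj orbC. Qed.

Lemma cyc_adj_irr (i : 'I_k) : (2 <= k)%N -> ~~ cyc_adj i i.
Proof.
move=> k2; rewrite /cyc_adj orbb; have := ltn_ord i.
case: (ltngtP i.+1 k) => [lt_ik _|//|eq_ik _]; first by rewrite modn_small ?neq_ltn ?ltnSn.
by rewrite eq_ik modnn; lia.
Qed.

Definition cycle_edges f : {set {set 'I_n}} :=
  [set [set f i; f j] | i in 'I_k, j in 'I_k & cyc_adj i j].

Definition cycle_copy f := ([set f i | i in 'I_k], cycle_edges f).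

Lemma cycle_copy_clique e f : (2 <= k)%N -> injective f ->
  (forall i j, i != j -> e (f i) (f j)) -> cycle_copy f \in cycle_copies e.
Proof.
move=> k2 f_inj ef; rewrite inE /=; apply/andP; split.
  apply/forallP => E; apply/implyP => /imset2P[i j _]; rewrite inE => /andP[_ ij] ->.
  have nij : i != j by apply: contraTneq ij => <-; exact: cyc_adj_irr.
  apply/existsP; exists (f i); apply/existsP; exists (f j).
  by rewrite eqxx (inj_eq f_inj) nij ef // !imset_f.
apply/existsP; exists f; apply/and3P; split => //; first exact/injectiveP.
apply/forallP => i; apply/forallP => j; apply/eqP; apply/idP/idP => [|ij]; last first.
  by apply/imset2P; exists i j; rewrite ?inE.
case/imset2P => i' j' _; rewrite inE => /andP[_ ij'] /eq_set2_inv.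
by case=> -[/f_inj-> /f_inj->]; rewrite // cyc_adj_sym.
Qed.

Lemma cycle_copy_edge e f (i j : 'I_k) : cycle_copy f \in cycle_copies e ->
  cyc_adj i j -> e (f i) (f j) || e (f j) (f i).
Proof.
rewrite inE => /andP[/forallP/(_ [set f i; f j])/implyP sub _] ij.
have /sub/existsP[u /existsP[v /and5P[/eqP + _ euv _ _]]] : [set f i; f j] \in (cycle_copy f).2.
  by apply/imset2P; exists i j; rewrite ?inE.
by case/eq_set2_inv => -[-> ->]; rewrite euv ?orbT.
Qed.

End CycleCopies.

Section Weight.

Variable m : nat.
Implicit Types x y : {ffun 'I_m -> bool}.

Lemma weight_count x : weight x = count id (fgraph x).
Proof. by rewrite /weight cardsE cardE size_filter fgraph_codom /= codomE count_map enumT. Qed.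

Lemma weight_le x : (weight x <= m)%N.
Proof. by rewrite /weight -[leqRHS]card_ord max_card. Qed.

Lemma perm_fgraph_weight x y : weight x = weight y -> perm_eq (fgraph x) (fgraph y).
Proof.
have count_true (z : {ffun 'I_m -> bool}) : count_mem true (fgraph z) = weight z.
  by rewrite weight_count; apply: eq_count => -[].
have count_false (z : {ffun 'I_m -> bool}) : (count_mem false (fgraph z) + weight z)%N = m.
  rewrite -count_true addnC (@eq_count _ (pred1 false) (predC (pred1 true))) => [|[]//].
  by rewrite count_predC size_tuple card_ord.
move=> w; apply/allP => -[] _; apply/eqP; first by rewrite !count_true.
by apply/eqP; rewrite -(eqn_add2r (weight x)) {2}w !count_false.
Qed.

Lemma weight_eq_perm x y : weight x = weight y -> exists s : {perm 'I_m}, forall j, y (s j) = x j.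
Proof.
move/perm_fgraph_weight/tuple_permP => [p eq_xy].
have s_inj : injective (fun j => enum_val (p (enum_rank j))).
  by move=> j j' /enum_val_inj/perm_inj/enum_rank_inj.
exists (perm s_inj) => j; rewrite permE.
have eq_t : fgraph x = [tuple tnth (fgraph y) (p l) | l < #|'I_m|] := val_inj eq_xy.
have := congr1 (fun t => tnth t (enum_rank j)) eq_t.
by rewrite tnth_mktuple !tnth_fgraph enum_rankK => <-.
Qed.

Definition set_one x i : {ffun 'I_m -> bool} := [ffun j => (j == i) || x j].

Lemma set_one_homo x i j : x j ==> set_one x i j.
Proof. by rewrite ffunE; apply/implyP => ->; rewrite orbT. Qed.

Lemma weight_set_one x i : x i = false -> weight (set_one x i) = (weight x).+1.
Proof.
move=> xi; rewrite /weight.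
have -> : [set j | set_one x i j] = i |: [set j | x j].
  by apply/setP => j; rewrite !inE ffunE.
by rewrite cardsU1 inE xi.
Qed.

Lemma weight_lt_false x : (weight x < m)%N -> exists i, x i = false.
Proof.
move=> lt_w; case: (pickP (fun i => ~~ x i)) => [i /negbTE xi|all_x]; first by exists i.
have x_full : [set j | x j] = setT by apply/setP => j; rewrite !inE; apply/negbFE/all_x.
by move: lt_w; rewrite /weight x_full cardsT card_ord ltnn.
Qed.

End Weight.

Section PairGraph.

Variable n : nat.
Implicit Types (x y : {ffun 'I_(n./2) -> bool}) (u v : 'I_n) (i j : 'I_(n./2)).

Lemma pair_vertex_subproof j (b : bool) : (j.*2 + b < n)%N.
Proof. by have := ltn_ord j; case: b => /=; lia. Qed.

Definition pair_vertex j b : 'I_n := Ordinal (pair_vertex_subproof j b).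

Lemma pair_vertex_half j b : (pair_vertex j b : nat)./2 = j.
Proof. by case: b => /=; lia. Qed.

Lemma pair_vertex_odd j b : odd (pair_vertex j b) = b.
Proof. by rewrite /= addnC oddD odd_double; case: b. Qed.

Lemma pair_vertex_inj j j' b b' : pair_vertex j b = pair_vertex j' b' -> j = j' /\ b = b'.
Proof.
move=> eq_jb; split; last by rewrite -(pair_vertex_odd j b) eq_jb pair_vertex_odd.
by apply: val_inj; rewrite /= -(pair_vertex_half j b) eq_jb pair_vertex_half.
Qed.

Lemma Gx_adj_pair_vertex x j j' b b' :
  Gx_adj x (pair_vertex j b) (pair_vertex j' b') = if j == j' then (b != b') && x j else true.
Proof.
rewrite /Gx_adj !pair_vertex_half val_eqE.
have [<-|jj'] := eqVneq j j'; last by rewrite andbT; apply: contra_neq jj' => /pair_vertex_inj[].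
have pair_vertex_j_inj : injective (pair_vertex j) by move=> c c' /pair_vertex_inj[].
by rewrite (inj_eq pair_vertex_j_inj) valK.
Qed.

Lemma Gx_adj_homo x y : (forall j, x j ==> y j) -> subrel (Gx_adj x) (Gx_adj y).
Proof.
move=> xy u v; rewrite /Gx_adj => /andP[-> /=]; case: ifP => // _.
by case: insub => // j /(implyP (xy j)).
Qed.

Section PairCycle.

Variables (i : 'I_(n./2)) (T : {set 'I_(n./2)}).

Definition pair_cycle_seq : seq 'I_n :=
  pair_vertex i false :: pair_vertex i true :: [seq pair_vertex j false | j <- enum T].

Definition pair_cycle k : {ffun 'I_k -> 'I_n} :=
  [ffun l : 'I_k => nth (pair_vertex i false) pair_cycle_seq l].

Lemma pair_vertex_false_inj : injective (pair_vertex^~ false).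
Proof. by move=> j j' /pair_vertex_inj[]. Qed.

Lemma size_pair_cycle_seq : size pair_cycle_seq = #|T|.+2.
Proof. by rewrite /= size_map cardE. Qed.

Lemma mem_pair_cycle_seq u : u \in pair_cycle_seq ->
  exists j b, u = pair_vertex j b /\ (j != i -> b = false).
Proof.
rewrite !in_cons => /or3P[/eqP->|/eqP->|/mapP[j _ ->]]; do 2?eexists; split=> //.
by rewrite eqxx.
Qed.

Lemma mem_pair_cycle_seq_other j : j != i ->
  (pair_vertex j false \in pair_cycle_seq) = (j \in T).
Proof.
move=> ji; rewrite !in_cons (mem_map pair_vertex_false_inj) mem_enum.
by rewrite (inj_eq pair_vertex_false_inj) (negbTE ji) /=; case: eqP => // /pair_vertex_inj[].
Qed.

Lemma pair_cycle_seq_clique x u v : u \in pair_cycle_seq -> v \in pair_cycle_seq ->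
  u != v -> Gx_adj (set_one x i) u v.
Proof.
case/mem_pair_cycle_seq => j [b [-> bF]] /mem_pair_cycle_seq[j' [b' [-> b'F]]] uv.
rewrite Gx_adj_pair_vertex; case: eqP => // eq_jj'; subst j'.
have bb' : b != b' by apply: contraNneq uv => ->.
rewrite bb' ffunE /=; case: eqP => // /eqP ji.
by move: bb'; rewrite bF ?b'F.
Qed.

Variable k : nat.
Hypothesis card_T : #|T|.+2 = k.

Lemma mem_pair_cycle (l : 'I_k) : pair_cycle k l \in pair_cycle_seq.
Proof. by rewrite ffunE mem_nth // size_pair_cycle_seq card_T. Qed.

Lemma pair_cycle_support : [set pair_cycle k l | l in 'I_k] = [set u in pair_cycle_seq].
Proof.
apply/setP => u; rewrite inE; apply/imsetP/idP => [[l _ ->]|us]; first exact: mem_pair_cycle.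
have lt_uk : (index u pair_cycle_seq < k)%N.
  by rewrite -card_T -size_pair_cycle_seq index_mem.
by exists (Ordinal lt_uk); rewrite // ffunE nth_index.
Qed.

Lemma pair_cycle_notin x : x i = false ->
  cycle_copy (pair_cycle k) \notin cycle_copies k (Gx_adj x).
Proof.
move=> xi; apply/negP.
have k1 : (1 < k)%N by rewrite -card_T.
have adj01 : cyc_adj (Ordinal (ltnW k1)) (Ordinal k1) by rewrite /cyc_adj /= modn_small.
by move/cycle_copy_edge/(_ adj01); rewrite !ffunE /= !Gx_adj_pair_vertex eqxx xi.
Qed.

Hypothesis iNT : i \notin T.

Lemma uniq_pair_cycle_seq : uniq pair_cycle_seq.
Proof.
rewrite /= !in_cons (mem_map pair_vertex_false_inj) mem_enum (negbTE iNT).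
rewrite (map_inj_uniq pair_vertex_false_inj) enum_uniq !andbT orbF.
apply/andP; split; first by apply/eqP => /pair_vertex_inj[].
by apply/mapP => -[j _ /pair_vertex_inj[]].
Qed.

Lemma pair_cycle_inj : injective (pair_cycle k).
Proof.
have lt_k (l : 'I_k) : (l < size pair_cycle_seq)%N by rewrite size_pair_cycle_seq card_T.
move=> l l'; rewrite !ffunE => /eqP.
by rewrite nth_uniq ?uniq_pair_cycle_seq // => /eqP/val_inj.
Qed.

Lemma pair_cycle_in x : cycle_copy (pair_cycle k) \in cycle_copies k (Gx_adj (set_one x i)).
Proof.
apply: cycle_copy_clique; [by rewrite -card_T | exact: pair_cycle_inj |] => l l' ll'.
by apply: pair_cycle_seq_clique; rewrite ?mem_pair_cycle ?(inj_eq pair_cycle_inj).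
Qed.

End PairCycle.

Lemma leq_Ck_set_one m x i : x i = false ->
  (Ck m.+2 (Gx_adj x) + 'C((n./2).-1, m) <= Ck m.+2 (Gx_adj (set_one x i)))%N.
Proof.
move=> xi.
set D := [set T : {set 'I_(n./2)} | T \subset [set~ i] & #|T| == m].
have card_D : #|D| = 'C((n./2).-1, m) by rewrite cards_draws cardsC1 card_ord.
have mem_D T : T \in D -> i \notin T /\ #|T|.+2 = m.+2.
  by rewrite inE => /andP[/subsetP sT /eqP ->]; split=> //; apply/negP => /sT; rewrite !inE eqxx.
pose g T := cycle_copy (pair_cycle i T m.+2).
have g_inj : {in D &, injective g}.
  move=> T T' /mem_D[iT cT] /mem_D[iT' cT'] [eq_support _].
  apply/setP => j; have [->|ji] := eqVneq j i; first by rewrite (negbTE iT) (negbTE iT').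
  rewrite -(mem_pair_cycle_seq_other T ji) -(mem_pair_cycle_seq_other T' ji).
  move/setP/(_ (pair_vertex j false)): eq_support.
  by rewrite (pair_cycle_support i cT) (pair_cycle_support i cT') !in_set.
have old_new : [disjoint cycle_copies m.+2 (Gx_adj x) & g @: D].
  rewrite disjoint_sym disjoint_subset; apply/subsetP => _ /imsetP[T /mem_D[_ cT] ->].
  by rewrite inE; exact: (pair_cycle_notin cT xi).
have sub : cycle_copies m.+2 (Gx_adj x) :|: g @: D
    \subset cycle_copies m.+2 (Gx_adj (set_one x i)).
  rewrite subUset (cycle_copies_subrel _ (Gx_adj_homo (set_one_homo x i))) /=.
  by apply/subsetP => _ /imsetP[T /mem_D[iT cT] ->]; apply: pair_cycle_in.
rewrite -!card_cycle_copies -card_D -(card_in_imset g_inj).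
by move: old_new; rewrite -(leq_card_setU _ _).2 => /eqP <-; apply: subset_leq_card.
Qed.

Lemma Ck_raise m d x : (weight x + d <= n./2)%N -> exists y, weight y = (weight x + d)%N /\
  (Ck m.+2 (Gx_adj x) + d * 'C((n./2).-1, m) <= Ck m.+2 (Gx_adj y))%N.
Proof.
elim: d x => [|d IHd] x le_wd; first by exists x; rewrite addn0 mul0n addn0.
have [i xi] : exists i, x i = false by apply: weight_lt_false; lia.
have [|y [wy le_y]] := IHd (set_one x i); first by rewrite weight_set_one //; lia.
exists y; split; first by rewrite wy weight_set_one // addSnnS.
by apply: leq_trans le_y; move: (leq_Ck_set_one m xi); rewrite mulSn; lia.
Qed.

Section Relabel.

Hypothesis n_even : ~~ odd n.

Lemma half_lt_subproof u : ((u : nat)./2 < n./2)%N.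
Proof. by have := ltn_ord u; have := odd_double_half n; rewrite (negbTE n_even); lia. Qed.

Definition pair_of u : 'I_(n./2) := Ordinal (half_lt_subproof u).

Lemma pair_vertexK u : pair_vertex (pair_of u) (odd u) = u.
Proof. by apply: val_inj; rewrite /= addnC odd_double_half. Qed.

Lemma Ck_Gx_weight k x y : weight x = weight y -> Ck k (Gx_adj x) = Ck k (Gx_adj y).
Proof.
wlog suff le_Ck : x y / weight x = weight y -> (Ck k (Gx_adj x) <= Ck k (Gx_adj y))%N.
  by move=> w; apply/eqP; rewrite eqn_leq !le_Ck.
case/weight_eq_perm => s ys.
pose relabel u := pair_vertex (s (pair_of u)) (odd u).
have relabel_inj : injective relabel.
  move=> u v /pair_vertex_inj[/perm_inj eq_pair eq_odd].
  by rewrite -[u]pair_vertexK -[v]pair_vertexK eq_pair eq_odd.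
apply: (leq_Ck_embedding _ relabel_inj) => u v.
rewrite -[in RHS](pair_vertexK u) -[in RHS](pair_vertexK v) !Gx_adj_pair_vertex.
by rewrite (inj_eq perm_inj) ys.
Qed.

End Relabel.

End PairGraph.

Lemma expn_sub_leq_ffact N r : ((N - r) ^ r <= N ^_ r)%N.
Proof.
elim: r N => [|r IHr] [|N]; rewrite ?expn0 ?ffactn0 // ?sub0n ?exp0n //.
by rewrite ffactSS expnS subSS leq_mul ?IHr //; lia.
Qed.

Lemma expn_double_leq_binomial N m : (m.+1.*2 <= N)%N ->
  (N.*2 ^ m <= 4 ^ m * m`! * 'C(N.-1, m))%N.
Proof.
move=> le_mN; have [->|m_gt0] := posnP m; first by rewrite bin0.
rewrite -mulnA [(m`! * _)%N]mulnC bin_ffact.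
apply: (@leq_trans ((4 * (N.-1 - m)) ^ m)); first by rewrite leq_exp2r //; lia.
by rewrite expnMn leq_mul2l expn_sub_leq_ffact orbT.
Qed.

Local Open Scope ring_scope.

Theorem lemma4 (R : realType) (k : nat) (hk : (3 <= k)%N) :
  exists (c : R) (n0 : nat), 0 < c /\
    forall (n : nat), (n0 <= n)%N -> ~~ odd n ->
    forall (x x' : {ffun 'I_(n./2) -> bool}),
      (weight x' <= weight x)%N ->
      c * (n%:R) ^+ (k - 2) * ((weight x - weight x')%N)%:R
        <= (Ck k (Gx_adj x))%:R - (Ck k (Gx_adj x'))%:R.
Proof.
set m := (k - 2)%N; have -> : k = m.+2 by rewrite /m; lia.
set K := (4 ^ m * m`!)%N; have K_gt0 : (0 < K)%N by rewrite muln_gt0 expn_gt0 fact_gt0.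
exists K%:R^-1, (4 * m.+2)%N; split => [|n le_n n_even x x' le_w]; first by rewrite invr_gt0 ltr0n.
set d := (weight x - weight x')%N; set L := 'C((n./2).-1, m).
have [|y [wy le_y]] := @Ck_raise n m d x'; first by have := weight_le x; lia.
rewrite (Ck_Gx_weight n_even _ (_ : weight x = weight y)); last by rewrite wy; lia.
have n_half : n = (n./2).*2 by rewrite -[LHS]odd_double_half (negbTE n_even).
have le_nm : K%:R^-1 * n%:R ^+ m <= L%:R :> R.
  rewrite ler_pdivrMl ?ltr0n // -natrX -natrM ler_nat n_half.
  by apply: expn_double_leq_binomial; lia.
have le_dL : (Ck m.+2 (Gx_adj x'))%:R + d%:R * L%:R <= (Ck m.+2 (Gx_adj y))%:R :> R.
  by rewrite -natrM -natrD ler_nat.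
have := ler_wpM2r (ler0n R d) le_nm; lra.
Qed.
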